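(* Let $G$ be a finite group and $S$ one of the Janko groups $J_1, J_2, J_3, J_4$. If $|G| = |S|$, then $G$ is neither a Frobenius group nor a 2-Frobenius group.
   Context: A finite group $G$ is a 2-Frobenius group if it has a normal series $1 \trianglelefteq A \trianglelefteq B \trianglelefteq G$ such that $B$ is a Frobenius group with Frobenius kernel $A$ and $G/A$ is a Frobenius group with Frobenius kernel $B/A$. Orders: $|J_1|=2^3\cdot3\cdot5\cdot7\cdot11\cdot19$, $|J_2|=2^7\cdot3^3\cdot5^2\cdot7$, $|J_3|=2^7\cdot3^5\cdot5\cdot17\cdot19$, $|J_4|=2^{21}\cdot3^3\cdot5\cdot7\cdot11^3\cdot23\cdot29\cdot31\cdot37\cdot43$. *)

From mathcomp Require Import all_boot all_order all_fingroup all_solvable.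
Set Implicit Arguments. Unset Strict Implicit. Unset Printing Implicit Defensive.
Local Open Scope group_scope.

(* G is a 2-Frobenius group: there is a normal series 1 <| A <| B <| G
   (A, B normal in G, so that G/A makes sense) such that B is a Frobenius
   group with kernel A and G/A is a Frobenius group with kernel B/A. *)
Definition two_Frobenius_group (gT : finGroupType) (G : {group gT}) : Prop :=
  exists (A B : {group gT}),
    [/\ A <| B, B <| G, A <| G,
        [Frobenius B with kernel A]
      & [Frobenius (G / A) with kernel (B / A)]].

Definition order_J1 : nat := 2^3 * 3 * 5 * 7 * 11 * 19.
Definition order_J2 : nat := 2^7 * 3^3 * 5^2 * 7.
Definition order_J3 : nat := 2^7 * 3^5 * 5 * 17 * 19.
Definition order_J4 : nat :=
  2^21 * 3^3 * 5 * 7 * 11^3 * 23 * 29 * 31 * 37 * 43.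

From mathcomp Require Import all_boot all_order all_fingroup all_solvable.
From mathcomp Require Import vcharacter.
Set Implicit Arguments. Unset Strict Implicit. Unset Printing Implicit Defensive.

(* Group theory reduces both properties to the existence of a factorization
   |G| = k * h * c with 1 < h, 1 < k, h dividing k_p - 1 for every prime p,
   and c dividing h_q - 1 for every prime q (a "Frobenius triple"): for a
   Frobenius group take k = |K|, h = |G : K|, c = 1, the key fact being that
   the complement order divides |P| - 1 for every Sylow subgroup P of the
   kernel K (Frattini argument); for a 2-Frobenius series 1 < A < B < G take
   k = |A|, h = |B : A|, c = |G : B|.

   Arithmetic then rules out Frobenius triples.  If p is a prime of k and
   y = log_p k, then h divides p^y - 1, which leaves a short list of
   candidates for h; once h is fixed, the exponent of each prime q in k is
   constrained independently of the other primes. *)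

(* The numerical shadow of a (2-)Frobenius group of order n: the kernel
   order k, the complement order h and (for 2-Frobenius groups) the order c
   of the top complement. *)
Definition frobenius_triple (n k h c : nat) : Prop :=
  [/\ k * h * c = n, 1 < h, 1 < k,
      forall p, prime p -> h %| (k`_p).-1
    & forall q, prime q -> c %| (h`_q).-1].

Definition no_frobenius_triple (n : nat) : Prop :=
  forall k h c, ~ frobenius_triple n k h c.

(* The exponent of q in the number whose factorization is fs, a list of
   (prime, exponent) pairs; the number itself is never computed. *)
Definition fexp (fs : seq (nat * nat)) (q : nat) : nat :=
  sumn [seq f.2 | f <- fs & f.1 == q].

Lemma factored_gt0 (fs : seq (nat * nat)) :
  all prime (unzip1 fs) -> 0 < \prod_(f <- fs) f.1 ^ f.2.
Proof.
move=> pr_fs; rewrite big_seq_cond; apply: prodn_cond_gt0 => f /andP[f_in _].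
by rewrite expn_gt0 prime_gt0 //; apply: (allP pr_fs); apply: map_f.
Qed.

Lemma logn_factored (fs : seq (nat * nat)) q : all prime (unzip1 fs) ->
  logn q (\prod_(f <- fs) f.1 ^ f.2) = fexp fs q.
Proof.
rewrite /fexp; elim: fs => [|f fs IH] /=; first by rewrite big_nil logn1.
case/andP=> pr_f pr_fs.
rewrite big_cons lognM ?factored_gt0 ?expn_gt0 ?prime_gt0 //.
rewrite lognX (logn_prime _ pr_f) IH // eq_sym.
by case: (f.1 == q); rewrite /= ?muln1 ?muln0.
Qed.

Lemma fexp_gt0 (fs : seq (nat * nat)) q : 0 < fexp fs q -> q \in unzip1 fs.
Proof.
rewrite /fexp; elim: fs => [|f fs IH] //=; rewrite in_cons.
by case: (eqVneq f.1 q) => [<- | _] //=; apply: IH.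
Qed.

(* Modular exponentiation, so that the search never builds large powers. *)
Definition expn_mod (q y d : nat) : nat := iter y (fun a => a * q %% d) (1 %% d).

Lemma expn_modE q y d : expn_mod q y d = q ^ y %% d.
Proof.
elim: y => [|y IH]; first by rewrite expn0.
by rewrite /expn_mod iterS -/(expn_mod q y d) IH modnMml expnSr.
Qed.

(* Possible exponents of the prime q in k, given h: if y > 0 then
   h | q^y - 1, and the remaining exponent of q, which goes to c, is bounded
   by its exponent in s^(log_s h) - 1 for every prime s of h. *)
Definition k_exponents (fs : seq (nat * nat)) (h q : nat) : seq nat :=
  let r := fexp fs q - logn q h in
  let bounds := [seq logn q (s ^ logn s h - 1) | s <- primes h] in
  [seq y <- iota 0 r.+1 |
     ((y == 0) || (expn_mod q y h == 1 %% h)) && all (leq (r - y)) bounds].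

(* Candidates for h when p^y is the p-part of k: the nontrivial divisors of
   p^y - 1 that divide the order. *)
Definition h_candidates (fs : seq (nat * nat)) (p y : nat) : seq nat :=
  [seq d <- divisors (p ^ y - 1) |
     (1 < d) && all (fun s => logn s d <= fexp fs s) (primes d)].

Definition no_triple_search (fs : seq (nat * nat)) : bool :=
  all (fun p => all (fun y => all (fun h =>
         (y \notin k_exponents fs h p)
         || has (fun q => nilp (k_exponents fs h q)) (unzip1 fs))
       (h_candidates fs p y)) (iota 1 (fexp fs p))) (unzip1 fs).

Section Soundness.

Variables (fs : seq (nat * nat)) (k h c : nat).
Hypothesis fs_prime : all prime (unzip1 fs).
Hypothesis triple : frobenius_triple (\prod_(f <- fs) f.1 ^ f.2) k h c.

Let hkc_gt0 : [/\ 0 < k, 0 < h & 0 < c].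
Proof.
case: triple => def_n _ _ _ _; move: (factored_gt0 fs_prime).
by rewrite -def_n !muln_gt0 => /andP[/andP[-> ->] ->].
Qed.

Lemma fexp_triple q :
  prime q -> fexp fs q = logn q k + logn q h + logn q c.
Proof.
have [k_gt0 h_gt0 c_gt0] := hkc_gt0; case: triple => def_n _ _ _ _ pr_q.
by rewrite -logn_factored // -def_n !lognM // muln_gt0 k_gt0.
Qed.

Lemma triple_k_exponent q : prime q -> logn q k \in k_exponents fs h q.
Proof.
move=> pr_q; have [_ h_gt0 c_gt0] := hkc_gt0; case: triple => _ _ _ dvd_k dvd_h.
have r_eq : fexp fs q - logn q h = logn q k + logn q c.
  by rewrite fexp_triple // addnAC addnK.
rewrite mem_filter mem_iota leq0n add0n ltnS r_eq leq_addr !andbT addKn all_map.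
apply/andP; split.
  case: posnP => //= _; rewrite expn_modE -/(_ == 1 %[mod h]) eqn_mod_dvd.
    by rewrite subn1 -p_part dvd_k.
  by rewrite expn_gt0 prime_gt0.
apply/allP=> s s_h /=.
have pr_s : prime s by move: s_h; rewrite mem_primes => /andP[].
apply: dvdn_leq_log; last by rewrite subn1 -p_part dvd_h.
by rewrite subn_gt0 -p_part p_part_gt1.
Qed.

Lemma triple_h_candidate (p := pdiv k) (y := logn (pdiv k) k) :
  [/\ p \in unzip1 fs, y \in iota 1 (fexp fs p) & h \in h_candidates fs p y].
Proof.
have [k_gt0 h_gt0 c_gt0] := hkc_gt0; case: triple => def_n h_gt1 k_gt1 dvd_k _.
have pr_p : prime p := pdiv_prime k_gt1.
have y_gt0 : 0 < y by rewrite logn_gt0 mem_primes pr_p k_gt0 pdiv_dvd.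
have y_le : y <= fexp fs p by rewrite fexp_triple // -addnA leq_addr.
split.
- exact/fexp_gt0/(leq_trans y_gt0 y_le).
- by rewrite mem_iota y_gt0 add1n ltnS.
rewrite mem_filter h_gt1 -dvdn_divisors; last first.
  by rewrite subn_gt0 -p_part p_part_gt1 -logn_gt0.
rewrite subn1 -p_part dvd_k // andbT; apply/allP=> s s_h.
have pr_s : prime s by move: s_h; rewrite mem_primes => /andP[].
by rewrite fexp_triple // addnAC leq_addl.
Qed.

Lemma no_triple_search_sound : ~~ no_triple_search fs.
Proof.
have [p_in y_in h_in] := triple_h_candidate.
apply/negP=> /allP/(_ _ p_in)/allP/(_ _ y_in)/allP/(_ _ h_in).
rewrite triple_k_exponent ?pdiv_prime //=; last by case: triple.
case/hasP=> q q_in /nilP no_exp.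
have pr_q : prime q := allP fs_prime q q_in.
by have := triple_k_exponent pr_q; rewrite no_exp.
Qed.

End Soundness.

Lemma no_frobenius_triple_factored (fs : seq (nat * nat)) :
  all prime (unzip1 fs) -> no_triple_search fs ->
  no_frobenius_triple (\prod_(f <- fs) f.1 ^ f.2).
Proof.
move=> pr_fs search k h c triple.
by case/negP: (no_triple_search_sound pr_fs triple).
Qed.

Definition J1_factors : seq (nat * nat) :=
  [:: (2, 3); (3, 1); (5, 1); (7, 1); (11, 1); (19, 1)].
Definition J2_factors : seq (nat * nat) := [:: (2, 7); (3, 3); (5, 2); (7, 1)].
Definition J3_factors : seq (nat * nat) :=
  [:: (2, 7); (3, 5); (5, 1); (17, 1); (19, 1)].
Definition J4_factors : seq (nat * nat) :=
  [:: (2, 21); (3, 3); (5, 1); (7, 1); (11, 3);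
      (23, 1); (29, 1); (31, 1); (37, 1); (43, 1)].

Lemma Janko_orders_factored :
  [/\ order_J1 = \prod_(f <- J1_factors) f.1 ^ f.2,
      order_J2 = \prod_(f <- J2_factors) f.1 ^ f.2,
      order_J3 = \prod_(f <- J3_factors) f.1 ^ f.2
    & order_J4 = \prod_(f <- J4_factors) f.1 ^ f.2].
Proof.
split; rewrite ?/order_J4 !big_cons big_nil /= !expn1 muln1.
1-3: by rewrite !mulnA.
(* The large powers are abstracted so that rewriting never unfolds them. *)
by move: (2 ^ 21) (3 ^ 3) (11 ^ 3) => a b c; rewrite !mulnA.
Qed.

Lemma Janko_no_frobenius_triple n :
  [\/ n = order_J1, n = order_J2, n = order_J3 | n = order_J4] ->
  no_frobenius_triple n.
Proof.
have [-> -> -> ->] := Janko_orders_factored.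
by case=> ->; apply: no_frobenius_triple_factored; vm_compute.
Qed.

Section FrobeniusGroups.
Local Open Scope group_scope.

(* The index of a Frobenius kernel K divides |P| - 1 for every Sylow
   subgroup P of K: by the Frattini argument N_G(P) is Frobenius with kernel
   N_G(P) :&: K and a complement of order |G : K|, which normalizes P and
   acts semiregularly on it. *)
Lemma Frobenius_index_dvd_part_pred
    (gT : finGroupType) (G K : {group gT}) (p : nat) :
  [Frobenius G with kernel K] -> (#|G : K| %| (#|K|`_p).-1)%N.
Proof.
move=> frobGK; have [ntK ltKG nsKG regK] := Frobenius_kerP frobGK.
have [sKG _] := andP nsKG.
have [P sylP] := Sylow_exists p K; rewrite -(card_Hall sylP).
have [-> | ntP] := eqVneq P 1%G; first by rewrite cards1 dvdn0.
have sPK : P \subset K := pHall_sub sylP.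
pose N := 'N_G(P).
have defG : K * N = G := Frattini_arg nsKG sylP.
have sPN : P \subset N by rewrite subsetI (subset_trans sPK sKG) normG.
have frobN : [Frobenius N with kernel N :&: K].
  apply/Frobenius_kerP; split.
  - apply: contraNneq ntP => trNK; apply/eqP/val_inj/trivgP.
    by rewrite -trNK subsetI sPN.
  - rewrite properEneq subsetIl andbT.
    apply: contraNneq (proper_subn ltKG) => eqNK.
    by rewrite -defG mul_subG // /N -{1}eqNK subsetIr.
  - exact: normalGI (subsetIl G _) nsKG.
  move=> x /setD1P[ntx /setIP[_ Kx]].
  rewrite subsetI subsetIl (subset_trans _ (regK x _)) ?setSI ?subsetIl //.
  by rewrite !inE ntx.
have [H frobNH] := existsP frobN.
have [defN _ _ _ _] := Frobenius_context frobNH.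
have oH : #|H| = #|G : K| by rewrite (index_sdprod defN) -defG indexMg indexgI.
have sHN : H \subset N by have [_ /mulG_sub[]] := sdprodP defN.
rewrite -oH; apply: regular_norm_dvd_pred.
  exact: subset_trans sHN (subsetIr _ _).
by apply: semiregularS (Frobenius_reg_ker frobNH); rewrite // subsetI sPN.
Qed.

Lemma Frobenius_triple (gT : finGroupType) (G K : {group gT}) :
  [Frobenius G with kernel K] -> frobenius_triple #|G| #|K| #|G : K| 1.
Proof.
move=> frobGK; have [ntK ltKG _ _] := Frobenius_kerP frobGK.
split=> //.
- by rewrite muln1 Lagrange // proper_sub.
- by rewrite indexg_gt1 proper_subn.
- by rewrite cardG_gt1.
by move=> p _; apply: Frobenius_index_dvd_part_pred.
Qed.

(* A 2-Frobenius series 1 < A < B < G yields the triple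
   (|A|, |B : A|, |G : B|); the top condition comes from the Frobenius group
   G / A with kernel B / A. *)
Lemma two_Frobenius_triple (gT : finGroupType) (G A B : {group gT}) :
    A <| B -> B <| G -> A <| G -> [Frobenius B with kernel A] ->
    [Frobenius G / A with kernel B / A] ->
  frobenius_triple #|G| #|A| #|B : A| #|G : B|.
Proof.
move=> nsAB nsBG nsAG frobB frobQ.
have [[sBG _] [_ nAG]] := (andP nsBG, andP nsAG).
have sAB : A \subset B := normal_sub nsAB.
have [oB h_gt1 k_gt1 dvd_k _] := Frobenius_triple frobB.
split=> //; first by rewrite -(Lagrange sBG) -oB muln1.
move=> q _; have := Frobenius_index_dvd_part_pred q frobQ.
rewrite index_quotient_eq ?card_quotient //; first exact: subset_trans sBG nAG.
exact: subset_trans (subsetIr _ _) sAB.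
Qed.

End FrobeniusGroups.

Theorem lemma2p9 (gT : finGroupType) (G : {group gT}) :
  [\/ #|G| = order_J1, #|G| = order_J2, #|G| = order_J3 | #|G| = order_J4] ->
  ~ Frobenius_group G /\ ~ two_Frobenius_group G.
Proof.
move=> /Janko_no_frobenius_triple no_triple; split.
  case/existsP=> H /Frobenius_kernel_exists[K /FrobeniusWker frobGK].
  exact: no_triple (Frobenius_triple frobGK).
case=> A [B [nsAB nsBG nsAG frobB frobQ]].
exact: no_triple (two_Frobenius_triple nsAB nsBG nsAG frobB frobQ).
Qed.
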